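(* Let $B$ be a subring of $D$ and let $f\in R=D[t;\sigma,\delta]$ be monic of degree $m\ge2$ and right $B$-weak invariant. Then $B\oplus Bt\oplus\dots\oplus Bt^{m-1}\subseteq\mathrm{Nuc}_r(S_f)$.
   Context: $D$ is an associative division ring, $\sigma$ a ring endomorphism of $D$, $\delta$ a left $\sigma$-derivation. $R=D[t;\sigma,\delta]$ is the skew polynomial ring with $ta=\sigma(a)t+\delta(a)$. For monic $f$ of degree $m$, $S_f$ is the set of polynomials of degree $<m$ with multiplication $g\circ h=$ remainder of $gh$ upon right division by $f$. $\mathrm{Nuc}_r(A)=\{x\in A:(yz)x=y(zx)\ \forall y,z\in A\}$. $f$ is right $B$-weak invariant if $fB\subseteq Df$ and $f(t)t=(bt+a)f(t)$ for some $a,b\in B$. *)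

From HB Require Import structures.
From mathcomp Require Import all_boot all_order all_algebra.
Set Implicit Arguments. Unset Strict Implicit. Unset Printing Implicit Defensive.
Import GRing.Theory.
Local Open Scope ring_scope.

(* Skew polynomial ring R = D[t; sigma, delta] with t a = sigma(a) t + delta(a).
   Elements are represented by their coefficient polynomials in {poly D}
   (sum_i a_i t^i  <->  sum_i a_i 'X^i); only the additive structure, size,
   coefficients and lead_coef of {poly D} are used. *)

Section Skew.
Variable D : nzRingType.
Variables (sigma delta : D -> D).

(* left multiplication by t :  t * (sum a_i t^i) = sum (sigma a_i t^{i+1} + delta a_i t^i) *)
Definition tmul (p : {poly D}) : {poly D} :=
  map_poly sigma p * 'X + map_poly delta p.

Definition skmul (p q : {poly D}) : {poly D} :=
  \sum_(i < size p) (p`_i)%:P * iter (nat_of_ord i) tmul q.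

Variable f : {poly D}.

Definition rdiv_step (g : {poly D}) : {poly D} :=
  g - skmul (lead_coef g *: 'X^(size g - size f)%N) f.

Fixpoint rmod_fuel (n : nat) (g : {poly D}) : {poly D} :=
  match n with
  | 0 => g
  | n'.+1 => if (size g < size f)%N then g else rmod_fuel n' (rdiv_step g)
  end.

Definition rmod (g : {poly D}) : {poly D} := rmod_fuel (size g) g.

Definition Sf_mul (g h : {poly D}) : {poly D} := rmod (skmul g h).

Definition in_Sf (g : {poly D}) : Prop := (size g < size f)%N.

Definition in_Nuc_r (x : {poly D}) : Prop :=
  in_Sf x /\ forall y z, in_Sf y -> in_Sf z ->
    Sf_mul (Sf_mul y z) x = Sf_mul y (Sf_mul z x).

Definition right_weak_invariant (B : {pred D}) : Prop :=
  (forall b, b \in B -> exists d : D, skmul f b%:P = skmul d%:P f) /\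
  (exists a b, a \in B /\ b \in B /\ skmul f 'X = skmul (b *: 'X + a%:P) f).

End Skew.

Definition left_sigma_derivation (D : nzRingType) (sigma : D -> D) (delta : D -> D) :=
  (forall a b, delta (a + b) = delta a + delta b) /\
  (forall a b, delta (a * b) = sigma a * delta b + delta a * b).

From mathcomp Require Import all_boot all_order all_algebra.
Import GRing.Theory.
Local Open Scope ring_scope.

(* Let g o h be the right remainder of g h modulo f. As f is monic, remainders
   are unique, so g o h only depends on g h modulo the left ideal R f.
   If f x = h f, then (y z - q f) x = y z x - (q h) f and
   y (z x - q' f) = y z x - (y q') f, so (y o z) o x and y o (z o x) are both
   the remainder of y z x. Right B-weak invariance gives f b in R f for b in B
   and f t in R f, hence f x in R f for all x in B[t], by induction on the
   degree of x. *)

Lemma size_sub_lead_lt (R : nzRingType) (p q : {poly R}) :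
  p != 0 -> size q = size p -> lead_coef q = lead_coef p ->
  (size (p - q)%R < size p)%N.
Proof.
move=> p_neq0 size_qp lead_qp; rewrite (polySpred p_neq0) ltnS.
apply/leq_sizeP => j; rewrite leq_eqVlt => /orP[/eqP <-|lt_j].
  by rewrite coefB -lead_coefE -lead_qp lead_coefE size_qp subrr.
by rewrite coefB !nth_default ?subrr // ?size_qp (polySpred p_neq0).
Qed.

Section SkewPolynomialRing.
Variable D : nzRingType.
Variables (sigma : {rmorphism D -> D}) (delta : D -> D).
Hypothesis deltaD : forall a b, delta (a + b) = delta a + delta b.
Hypothesis deltaM : forall a b, delta (a * b) = sigma a * delta b + delta a * b.
Implicit Types (p q r g h : {poly D}) (c : D).
Local Notation T := (tmul sigma delta).
Local Notation "p ** q" := (skmul sigma delta p q) (at level 40, left associativity).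

Lemma delta0 : delta 0 = 0.
Proof. by apply: (addrI (delta 0)); rewrite -deltaD !addr0. Qed.

Lemma delta1 : delta 1 = 0.
Proof.
by apply: (addrI (delta 1)); rewrite addr0 -{3}[1]mulr1 deltaM rmorph1 mul1r mulr1.
Qed.

Lemma coef_tmul p j : (T p)`_j = (if j is j'.+1 then sigma p`_j' else 0) + delta p`_j.
Proof. by rewrite /tmul coefD coefMX !coef_map_id0 ?rmorph0 ?delta0 //; case: j. Qed.

Lemma tmulD p q : T (p + q) = T p + T q.
Proof.
apply/polyP => -[|j]; rewrite coefD !coef_tmul !coefD deltaD; first by rewrite !add0r.
by rewrite rmorphD addrACA.
Qed.

Lemma tmul0 : T 0 = 0.
Proof. by apply/polyP => -[|j]; rewrite coef_tmul !coef0 ?rmorph0 delta0 addr0. Qed.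

Lemma iter_tmulD n p q : iter n T (p + q) = iter n T p + iter n T q.
Proof. by elim: n => //= n ->; rewrite tmulD. Qed.

Lemma iter_tmul0 n : iter n T 0 = 0.
Proof. by elim: n => //= n ->; apply: tmul0. Qed.

Lemma tmulCM c p : T (c%:P * p) = (sigma c)%:P * T p + (delta c)%:P * p.
Proof.
apply/polyP => j; rewrite coef_tmul coefD !coefCM coef_tmul deltaM mulrDr addrA.
by case: j => [|j]; rewrite ?coefCM ?mulr0 ?rmorphM.
Qed.

Lemma tmulMX p : T (p * 'X) = T p * 'X.
Proof.
apply/polyP => -[|[|j]]; rewrite coefMX !coef_tmul !coefMX //=.
- by rewrite delta0 addr0.
- by rewrite rmorph0 add0r.
Qed.

Lemma tmulC c : T c%:P = (sigma c)%:P * 'X + (delta c)%:P.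
Proof.
by apply/polyP => -[|[|j]]; rewrite coef_tmul coefD coefMX !coefC /= ?delta0 ?rmorph0.
Qed.

Lemma tmulXn j : T ('X^j) = 'X^(j.+1).
Proof.
apply/polyP => -[|i]; rewrite coef_tmul !coefXn ?coefXn ?eqSS.
  by case: eqP => _; rewrite ?delta1 ?delta0 add0r.
by do 2?case: eqP => _; rewrite ?rmorph1 ?rmorph0 ?delta1 ?delta0 ?addr0.
Qed.

Lemma skmulE n p r :
  (size p <= n)%N -> p ** r = \sum_(i < n) (p`_i)%:P * iter i T r.
Proof.
move=> le_p_n; rewrite /skmul (big_ord_widen n (fun i => (p`_i)%:P * iter i T r) le_p_n).
rewrite big_mkcond /=; apply: eq_bigr => i _; case: ifP => // /negbT.
by rewrite -leqNgt => /(nth_default 0) ->; rewrite mul0r.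
Qed.

Lemma skmulDl p q r : (p + q) ** r = p ** r + q ** r.
Proof.
set n := maxn (size p) (size q).
rewrite (@skmulE n (p + q)) ?size_polyD // (@skmulE n p) ?leq_maxl //.
rewrite (@skmulE n q) ?leq_maxr // -big_split.
by apply: eq_bigr => i _; rewrite coefD polyCD mulrDl.
Qed.

Lemma skmul0l r : 0 ** r = 0.
Proof. by rewrite /skmul size_poly0 big_ord0. Qed.

Lemma skmulNl p r : (- p) ** r = - (p ** r).
Proof. by apply: (addrI (p ** r)); rewrite -skmulDl !subrr skmul0l. Qed.

Lemma skmulDr p q r : p ** (q + r) = p ** q + p ** r.
Proof. by rewrite /skmul -big_split; apply: eq_bigr => i _; rewrite iter_tmulD mulrDr. Qed.

Lemma skmul0r p : p ** 0 = 0.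
Proof. by rewrite /skmul big1 // => i _; rewrite iter_tmul0 mulr0. Qed.

Lemma skmulNr p r : p ** (- r) = - (p ** r).
Proof. by apply: (addrI (p ** r)); rewrite -skmulDr !subrr skmul0r. Qed.

Lemma skmulCl c r : c%:P ** r = c%:P * r.
Proof. by rewrite (@skmulE 1) ?size_polyC_leq1 // big_ord1 coefC. Qed.

Lemma skmulMXl p r : (p * 'X) ** r = p ** T r.
Proof.
have [->|p_neq0] := eqVneq p 0; first by rewrite mul0r !skmul0l.
rewrite (@skmulE (size p).+1) ?size_mulX // big_ord_recl coefMX polyC0 mul0r add0r.
by apply: eq_bigr => i _; rewrite coefMX /= -iterS iterSr.
Qed.

Lemma skmulXnl k r : 'X^k ** r = iter k T r.
Proof.
elim: k r => [|k IHk] r; first by rewrite expr0 -polyC1 skmulCl mul1r.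
by rewrite exprSr skmulMXl IHk iterSr.
Qed.

Lemma skmulCMl c q r : (c%:P * q) ** r = c%:P * (q ** r).
Proof.
elim/poly_ind: q r => [|q d IHq] r; first by rewrite mulr0 skmul0l mulr0.
by rewrite mulrDr mulrA !skmulDl !skmulMXl IHq -polyCM !skmulCl polyCM mulrDr mulrA.
Qed.

Lemma skmul_tmul q r : T q ** r = T (q ** r).
Proof.
elim/poly_ind: q r => [|q c IHq] r; first by rewrite tmul0 skmul0l tmul0.
rewrite tmulD tmulMX tmulC !skmulDl !skmulMXl IHq !skmulCl.
by rewrite tmulD tmulCM addrA.
Qed.

Lemma skmulA p q r : p ** q ** r = p ** (q ** r).
Proof.
elim/poly_ind: p q r => [|p c IHp] q r; first by rewrite !skmul0l.
by rewrite !skmulDl !skmulMXl !skmulCl skmulCMl IHp skmul_tmul.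
Qed.

Lemma skmulXnr p j : p ** 'X^j = p * 'X^j.
Proof.
elim/poly_ind: p j => [|p c IHp] j; first by rewrite skmul0l mul0r.
by rewrite skmulDl skmulMXl skmulCl tmulXn IHp mulrDl exprS mulrA.
Qed.

Lemma tmul_monic p : p \is monic -> T p \is monic /\ size (T p) = (size p).+1.
Proof.
move=> p_monic; have sigma_p_monic := monic_map sigma p_monic.
have sigma_monic : map_poly sigma p * 'X \is monic by rewrite monicMr ?monicX.
have size_sigma : size (map_poly sigma p * 'X) = (size p).+1.
  by rewrite size_mulX ?monic_neq0 // size_map_poly_id0 // (monicP p_monic) rmorph1 oner_neq0.
have size_delta : (size (map_poly delta p) <= size p)%N by exact: size_poly.
by rewrite /tmul monicE lead_coefDl ?size_sigma // -monicE sigma_monic size_polyDl ?size_sigma.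
Qed.

Lemma iter_tmul_monic k p :
  p \is monic -> iter k T p \is monic /\ size (iter k T p) = (size p + k)%N.
Proof.
move=> p_monic; elim: k => [|k [IHmonic IHsize]]; first by rewrite addn0.
by have [] := tmul_monic _ IHmonic; rewrite /= addnS IHsize.
Qed.

Lemma size_skmul_monic q f : q != 0 -> f \is monic -> (size f <= size (q ** f))%N.
Proof.
elim/poly_ind: q f => [|q c IHq] f; first by rewrite eqxx.
move=> qc_neq0 f_monic; have [Tf_monic size_Tf] := tmul_monic _ f_monic.
have size_cf : (size (c%:P * f)%R <= size f)%N.
  have [->|c_neq0] := eqVneq c 0; first by rewrite mul0r size_poly0.
  by rewrite size_Mmonic ?polyC_eq0 // size_polyC c_neq0.
rewrite skmulDl skmulMXl skmulCl.
have [q0|q_neq0] := eqVneq q 0.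
  move: qc_neq0; rewrite q0 mul0r skmul0l !add0r polyC_eq0 => c_neq0.
  by rewrite size_Mmonic ?polyC_eq0 // size_polyC c_neq0.
have lt_f_qTf : (size f < size (q ** T f))%N by rewrite -size_Tf IHq.
by rewrite size_polyDl (ltnW lt_f_qTf, leq_ltn_trans size_cf lt_f_qTf).
Qed.

Lemma right_weak_invariant_fx_in_Rf (f : {poly D}) (B : {pred D}) (x : {poly D}) :
  right_weak_invariant sigma delta f B -> (forall i, x`_i \in B) ->
  exists h, f ** x = h ** f.
Proof.
case=> [f_invC [a [b [_ [_ f_invX]]]]]; elim/poly_ind: x => [|x c IHx] x_B.
  by exists 0; rewrite skmul0r skmul0l.
have [|h fx] := IHx.
  by move=> i; have := x_B i.+1; rewrite coefD coefMX coefC addr0.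
have [|d fc] := f_invC c.
  by have := x_B 0%N; rewrite coefD coefMX coefC add0r.
have xX : x * 'X = x ** 'X by rewrite -['X in RHS]expr1 skmulXnr.
exists (h ** (b *: 'X + a%:P) + d%:P).
rewrite skmulDr skmulDl fc xX -(skmulA f x) fx (skmulA h f) f_invX.
by rewrite -(skmulA h).
Qed.

Section RightDivision.
Variable f : {poly D}.
Hypothesis f_monic : f \is monic.
Local Notation rmod := (rmod sigma delta f).
Local Notation rmod_fuel := (rmod_fuel sigma delta f).
Local Notation rdiv_step := (rdiv_step sigma delta f).
Local Notation Sf_mul := (Sf_mul sigma delta f).

Lemma size_rdiv_step g : (size f <= size g)%N -> (size (rdiv_step g) < size g)%N.
Proof.
move=> le_fg; have g_neq0 : g != 0.
  by rewrite -size_poly_gt0 (leq_trans _ le_fg) // size_poly_gt0 monic_neq0.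
have [Xf_monic size_Xf] := iter_tmul_monic (size g - size f) _ f_monic.
rewrite /rdiv_step -mul_polyC skmulCMl skmulXnl; apply: size_sub_lead_lt => //.
  by rewrite size_Mmonic ?polyC_eq0 ?lead_coef_eq0 // size_polyC lead_coef_eq0 g_neq0 size_Xf subnKC.
by rewrite lead_coef_Mmonic // lead_coefC.
Qed.

Lemma rmod_fuelP n g : (size g < n + size f)%N ->
  exists q, rmod_fuel n g = g - q ** f /\ (size (rmod_fuel n g) < size f)%N.
Proof.
elim: n g => [|n IHn] g lt_g /=; first by exists 0; rewrite skmul0l subr0.
case: ifP => [lt_gf|/negbT]; first by exists 0; rewrite skmul0l subr0.
rewrite -leqNgt => le_fg.
have [|q [-> small]] := IHn (rdiv_step g).
  by rewrite (leq_trans (size_rdiv_step _ le_fg)) // -ltnS -addSn.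
by exists (lead_coef g *: 'X^(size g - size f) + q); rewrite skmulDl opprD addrA.
Qed.

Lemma rmodP g : exists q, rmod g = g - q ** f /\ (size (rmod g) < size f)%N.
Proof. by apply: rmod_fuelP; rewrite -{1}[size g]addn0 ltn_add2l size_poly_gt0 monic_neq0. Qed.

Lemma rmod_unique g q r : (size r < size f)%N -> r = g - q ** f -> rmod g = r.
Proof.
move=> small_r def_r; have [q' [def_rmod small_rmod]] := rmodP g.
have diff : rmod g - r = (q - q') ** f.
  by rewrite def_rmod def_r skmulDl skmulNl opprB addrC addrA subrK.
apply/eqP; rewrite -subr_eq0 diff; have [->|qq'_neq0] := eqVneq (q - q') 0.
  by rewrite skmul0l.
have := size_skmul_monic _ _ qq'_neq0 f_monic; rewrite -diff => /leq_trans/(_ (size_polyD _ _)).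
by rewrite size_polyN leq_max leqNgt small_rmod leqNgt small_r.
Qed.

Lemma rmodB_skmul g q : rmod (g - q ** f) = rmod g.
Proof.
have [q' [def_rmod small_rmod]] := rmodP g.
apply: (@rmod_unique _ (q' - q)) => //.
by rewrite def_rmod skmulDl skmulNl opprD opprK addrA addrAC subrK.
Qed.

Lemma Sf_mulA_of_fx_in_Rf x : (exists h, f ** x = h ** f) ->
  forall y z, Sf_mul (Sf_mul y z) x = Sf_mul y (Sf_mul z x).
Proof.
move=> [h fx] y z; rewrite /Sf_mul.
have [q1 [-> _]] := rmodP (y ** z); have [q2 [-> _]] := rmodP (z ** x).
rewrite skmulDl skmulNl skmulDr skmulNr (skmulA q1) fx -(skmulA q1) -(skmulA y q2).
by rewrite !rmodB_skmul skmulA.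
Qed.

End RightDivision.

End SkewPolynomialRing.

Theorem mainTheorem4
  (D : unitRingType)
  (D_div : forall x : D, x != 0 -> x \is a GRing.unit)
  (sigma : {rmorphism D -> D}) (delta : D -> D)
  (hdelta : left_sigma_derivation sigma delta)
  (B : {pred D}) (hB : subring_closed B)
  (f : {poly D}) (m : nat)
  (hf_monic : f \is monic) (hf_deg : size f = m.+1) (hm : (2 <= m)%N)
  (hf_inv : right_weak_invariant sigma delta f B) :
  forall x : {poly D}, (size x <= m)%N -> (forall i, x`_i \in B) ->
    in_Nuc_r sigma delta f x.
Proof.
move=> x size_x x_B; have [deltaD deltaM] := hdelta.
split; first by rewrite /in_Sf hf_deg ltnS.
move=> y z _ _; apply: Sf_mulA_of_fx_in_Rf => //.
exact: right_weak_invariant_fx_in_Rf hf_inv x_B.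
Qed.
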